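(* Let $T$ be a tree on $[m]$ with depth-first walk $X$ and height process $H$, and let $\mathcal Q\subset\mathbb Z_{\ge0}\times\mathbb Z_{\ge0}$ be finite. Suppose $\mathcal Q\cap X=\mathcal Q\cap(H/2)$ and let $k=|\mathcal Q\cap X|$. Then, viewing $G^X=G^X(T,\mathcal Q)$ and $G^H=G^H(T,\mathcal Q)$ as metric spaces on their common vertex set with graph distance (rooted at vertex $1$), \[d_{GH}(G^X,G^H)\le k\big(\max_{0\le i<m}|X(i)-H(i)/2|+2\big).\]
   Context: Ordered depth-first search ${\bf oDFS}(T)$ for a tree $T$ on $[m]$ rooted at $1$: set $\mathcal O_0=(1)$ (ordered list), $\mathcal A_0=\emptyset$; for $i=0,\dots,m-1$ let $v_i$ be the first element of $\mathcal O_i$, $\mathcal N_i$ the neighbours of $v_i$ outside $\mathcal A_i\cup\mathcal O_i$, $\mathcal A_{i+1}=\mathcal A_i\cup\{v_i\}$, and $\mathcal O_{i+1}$ obtained by deleting $v_i$ from the front and placing $\mathcal N_i$ in increasing order at the front. Depth-first walk $X(i)=|\mathcal O_i|-1$; height process $H(i)=$ distance in $T$ from $1$ to $v_i$ ($0\le i<m$; both set to $0$ for $i\ge m$). For $S\subset\mathbb R^+\times\mathbb R^+$ and $f$, $S\cap f:=\{(x,y)\in S:0<y\le f(x)\}$. $G^X(T,\mathcal Q)$: add to $T$, for each $(i,j)\in\mathcal Q\cap X$, an edge between $v_i$ and the $j$-th vertex of $\mathcal O_i$ counted from the end of the list. $G^H(T,\mathcal Q)$: add to $T$, for each $(i,j)\in\mathcal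 Q$ with $0<2j\le H(i)$, an edge between $v_i$ and the vertex at distance $2j-1$ from the root on the path from the root to $v_i$ in $T$. Gromov–Hausdorff distance between rooted compact metric spaces $(X,\rho),(X',\rho')$: $d_{GH}=\inf\{d_H(\phi(X),\phi'(X'))\vee\delta(\phi(\rho),\phi'(\rho'))\}$ over all metric spaces $(M,\delta)$ and isometric embeddings $\phi:X\to M$, $\phi':X'\to M$, where $d_H$ is the Hausdorff distance. *)

From Stdlib Require Import Reals.
From mathcomp Require Import all_boot.
Set Implicit Arguments. Unset Strict Implicit. Unset Printing Implicit Defensive.

Definition vset (m : nat) : seq nat := iota 1 m.

Definition walkb (g : rel nat) (m u v n : nat) : bool :=
  [exists t : n.-tuple 'I_m.+1,
     path g u (map val t) && (last u (map val t) == v)].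

(* Graph distance on a graph with vertex set [m]: the least n such that
   a walk of length n from u to v exists (for connected graphs this is
   < m; convention: m if no such walk exists). *)
Definition gdist (g : rel nat) (m u v : nat) : nat :=
  find (walkb g m u v) (iota 0 m).

Definition is_tree (m : nat) (T : rel nat) : Prop :=
  [/\ (forall u v, T u v = T v u),
      (forall u, ~~ T u u),
      (forall u v, T u v -> (1 <= u <= m) && (1 <= v <= m)),
      (forall v, 1 <= v <= m -> exists p : seq nat, path T 1 p && (last 1 p == v))
    & size [seq e <- [seq (u, v) | u <- vset m, v <- vset m]
             | (e.1 < e.2) && T e.1 e.2] = m.-1].

(* Ordered depth-first search oDFS(T). State = (O_i, A_i). *)
Definition nbrs (m : nat) (T : rel nat) (v : nat) (Os As : seq nat) : seq nat :=
  [seq w <- iota 1 m | T v w && (w \notin As) && (w \notin Os)].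

Definition dfs_step (m : nat) (T : rel nat) (s : seq nat * seq nat)
  : seq nat * seq nat :=
  let: (Os, As) := s in
  let v := head 0 Os in (nbrs m T v Os As ++ behead Os, v :: As).

Definition dfs_state (m : nat) (T : rel nat) (i : nat) : seq nat * seq nat :=
  iter i (dfs_step m T) ([:: 1], [::]).

Definition dfsO (m : nat) (T : rel nat) (i : nat) : seq nat := (dfs_state m T i).1.
Definition dfsv (m : nat) (T : rel nat) (i : nat) : nat := head 0 (dfsO m T i).
Definition dfsX (m : nat) (T : rel nat) (i : nat) : nat :=
  if i < m then (size (dfsO m T i)).-1 else 0.
Definition height (m : nat) (T : rel nat) (i : nat) : nat :=
  if i < m then gdist T m 1 (dfsv m T i) else 0.

Definition tparent (m : nat) (T : rel nat) (v : nat) : nat :=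
  head 0 [seq w <- iota 1 m | T v w && (gdist T m 1 w < gdist T m 1 v)].
Definition ancestor (m : nat) (T : rel nat) (v d : nat) : nat :=
  iter (gdist T m 1 v - d) (tparent m T) v.

(* Membership in Q cap X and Q cap (H/2):  0 < y <= f(x). *)
Definition inQX (m : nat) (T : rel nat) (q : nat * nat) : bool :=
  (0 < q.2) && (q.2 <= dfsX m T q.1).
Definition inQH (m : nat) (T : rel nat) (q : nat * nat) : bool :=
  (0 < q.2) && (q.2.*2 <= height m T q.1).

Definition is_edge (a b u v : nat) : bool :=
  ((u == a) && (v == b)) || ((u == b) && (v == a)).

Definition GX (m : nat) (T : rel nat) (Q : seq (nat * nat)) : rel nat :=
  fun u v => T u v ||
    has (fun q => is_edge (dfsv m T q.1) (nth 0 (rev (dfsO m T q.1)) q.2.-1) u v)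
        [seq q <- Q | inQX m T q].

Definition GH (m : nat) (T : rel nat) (Q : seq (nat * nat)) : rel nat :=
  fun u v => T u v ||
    has (fun q => is_edge (dfsv m T q.1)
                          (ancestor m T (dfsv m T q.1) (q.2.*2 - 1)) u v)
        [seq q <- Q | inQH m T q].

Local Open Scope R_scope.

(* Real-valued max / min of a finite nonempty list (0 on the empty list). *)
Definition maxR (s : seq R) : R :=
  match s with [::] => 0 | x :: s' => foldr Rmax x s' end.
Definition minR (s : seq R) : R :=
  match s with [::] => 0 | x :: s' => foldr Rmin x s' end.

Definition is_metric (M : Type) (d : M -> M -> R) : Prop :=
  (forall x y, 0 <= d x y) /\ (forall x y, d x y = 0 <-> x = y) /\
  (forall x y, d x y = d y x) /\ (forall x y z, d x z <= d x y + d y z).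

Definition hausdorff (M : Type) (d : M -> M -> R) (A B : seq M) : R :=
  Rmax (maxR [seq minR [seq d a b | b <- B] | a <- A])
       (maxR [seq minR [seq d a b | a <- A] | b <- B]).

(* d_GH((vset m, d1, r1), (vset m, d2, r2)) <= c, i.e. the infimum over all
   metric spaces (M, delta) and isometric embeddings phi, phi' of
   max(d_H(phi X, phi' X'), delta(phi r1, phi' r2)) is at most c. *)
Definition GH_le (m : nat) (d1 d2 : nat -> nat -> R) (r1 r2 : nat) (c : R) : Prop :=
  forall eps : R, 0 < eps ->
  exists (M : Type) (delta : M -> M -> R) (phi phi' : nat -> M),
    is_metric delta /\
    (forall u v, u \in vset m -> v \in vset m -> delta (phi u) (phi v) = d1 u v) /\
    (forall u v, u \in vset m -> v \in vset m -> delta (phi' u) (phi' v) = d2 u v) /\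
    (Rmax (hausdorff delta (map phi (vset m)) (map phi' (vset m)))
          (delta (phi r1) (phi' r2)) < c + eps).

From Stdlib Require Import Reals Lra.
From mathcomp Require Import all_boot zify.
Set Implicit Arguments. Unset Strict Implicit. Unset Printing Implicit Defensive.

(* Both graphs are T plus k extra edges, one per point q = (i, j) of
   Q cap X = Q cap (H/2); the two versions of the edge share the endpoint
   v_i and differ in the other one: a_q, the j-th entry of the oDFS stack
   from the bottom, versus b_q, the ancestor of v_i at depth 2j - 1.
   The proof has four layers.
   1. Graph distances: basic metric facts for [gdist], and the fact that
      adding an edge between vertices at distance <= L shortens every
      distance by at most L ([gdist_add_edge]); rerouting the k extra
      edges one at a time then changes distances by at most k K, where K
      bounds d_T(a_q, b_q) + 1 ([gdist_reroute]).
   2. Coupling: two metrics on the same finite set that differ by at most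
      2c everywhere are, as rooted spaces, at GH distance at most c
      ([GH_le_of_close]).
   3. Trees and oDFS: every tree edge joins a vertex to its parent; an
      invariant of the exploration ([stack_inv]) records, for each stack
      entry, the step t at which it was pushed as a child of v_t, with
      X(t) <= position <= X(t+1) and v_t an ancestor of the current
      vertex.  Hence a_q hangs from an ancestor v_t of v_i, and
      d_T(a_q, b_q) <= 1 + |H(t) - (2j - 1)| ([endpoints_close]).
   4. Comparing that depth gap with X at times t, t+1 gives
      d_T(a_q, b_q) + 1 <= 2 (max |X - H/2| + 2), and layers 1-2 conclude. *)

Section GraphDistance.
Variables (g : rel nat) (m : nat).

Lemma walkbP u v n :
  reflect (exists p : seq nat,
             [/\ size p = n, all (fun x => x <= m) p, path g u p & last u p = v])
          (walkb g m u v n).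
Proof.
apply: (iffP existsP) => [[t /andP [t_path /eqP t_last]] | [p [<- p_le p_path p_last]]].
  exists (map val t); split => //; first by rewrite size_map size_tuple.
  by apply/allP => _ /mapP [x _ ->]; rewrite -ltnS ltn_ord.
exists (map_tuple (@inord m) (in_tuple p)).
have -> : map val (map_tuple (@inord m) (in_tuple p)) = p.
  rewrite /= -map_comp -[RHS]map_id; apply/eq_in_map => x x_p /=.
  by apply: inordK; rewrite ltnS (allP p_le).
by rewrite p_path p_last eqxx.
Qed.

Lemma gdist_le_m u v : gdist g m u v <= m.
Proof. by rewrite /gdist -[X in _ <= X](size_iota 0 m) find_size. Qed.

Lemma gdist_walk u v : gdist g m u v < m -> walkb g m u v (gdist g m u v).
Proof.
move=> lt_d; have has_walk : has (walkb g m u v) (iota 0 m) by rewrite has_find size_iota.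
by have := nth_find 0 has_walk; rewrite nth_iota // add0n.
Qed.

Lemma gdist_min u v n : walkb g m u v n -> gdist g m u v <= n.
Proof.
move=> walk_n; case: (ltnP n m) => [lt_nm | le_mn]; last exact: leq_trans (gdist_le_m u v) le_mn.
rewrite leqNgt; apply/negP => lt_n.
by have := before_find 0 lt_n; rewrite nth_iota // add0n walk_n.
Qed.

Lemma gdist_path u p :
  all (fun x => x <= m) p -> path g u p -> gdist g m u (last u p) <= size p.
Proof. by move=> p_le p_path; apply: gdist_min; apply/walkbP; exists p. Qed.

Lemma gdist_refl u : gdist g m u u = 0.
Proof. by apply/eqP; rewrite -leqn0; apply: (gdist_path (p := [::])). Qed.

Lemma gdist_eq0 u v : 0 < m -> gdist g m u v = 0 -> u = v.
Proof.
move=> m_gt0 d0; have := @gdist_walk u v; rewrite d0 => /(_ m_gt0) /walkbP [p [p0 _ _ <-]].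
by case: p p0.
Qed.

Lemma gdist_edge a b : g a b -> b <= m -> gdist g m a b <= 1.
Proof. by move=> gab le_bm; apply: (gdist_path (p := [:: b])) => /=; rewrite ?le_bm ?gab. Qed.

Lemma gdist_tri u v w : gdist g m u w <= gdist g m u v + gdist g m v w.
Proof.
case: (ltnP (gdist g m u v) m) => [duv | duv]; last first.
  by apply: leq_trans (gdist_le_m _ _) (leq_trans duv (leq_addr _ _)).
case: (ltnP (gdist g m v w) m) => [dvw | dvw]; last first.
  by apply: leq_trans (gdist_le_m _ _) (leq_trans dvw (leq_addl _ _)).
move/walkbP: (gdist_walk duv) => [p [<- p_le p_path p_last]].
move/walkbP: (gdist_walk dvw) => [q [<- q_le q_path q_last]].
have := gdist_path (u := u) (p := p ++ q).
by rewrite last_cat p_last q_last size_cat all_cat p_le q_le cat_path p_path p_last q_path; apply.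
Qed.

Lemma gdist_potential (f : nat -> nat) u v :
  f u = 0 ->
  (forall a b, (a <= m) || (a == u) -> b <= m -> g a b -> f b <= (f a).+1) ->
  minn (f v) m <= gdist g m u v.
Proof.
move=> fu0 f_lip; case: (ltnP (gdist g m u v) m) => [duv | duv]; last first.
  exact: leq_trans (geq_minr _ _) duv.
move/walkbP: (gdist_walk duv) => [p [<- p_le p_path <-]].
apply: leq_trans (geq_minl _ _) _.
suff walk_bound a : (a <= m) || (a == u) -> path g a p -> all (fun x => x <= m) p ->
    f (last a p) <= f a + size p by rewrite -[size p]add0n -fu0 walk_bound ?eqxx ?orbT.
elim: {p_path p_le} p a => [|x p IH] a a_ok /=; first by rewrite addn0.
move=> /andP [gax x_path] /andP [le_xm p_le].
apply: leq_trans (IH x _ x_path p_le) _; first by rewrite le_xm.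
by rewrite addnS -addSn leq_add2r f_lip.
Qed.

Hypothesis g_sym : forall a b, g a b = g b a.

Lemma gdist_sym u v : u <= m -> v <= m -> gdist g m u v = gdist g m v u.
Proof.
suff le_sym x y : x <= m -> y <= m -> gdist g m y x <= gdist g m x y.
  by move=> le_um le_vm; apply/eqP; rewrite eqn_leq !le_sym.
move=> le_xm le_ym; have := @gdist_potential (fun w => gdist g m w x) x y.
rewrite gdist_refl (minn_idPl (gdist_le_m _ _)); apply=> // a b a_ok le_bm gab.
have le_am : a <= m by case/orP: a_ok => // /eqP ->.
apply: leq_trans (gdist_tri b a x) _; rewrite addnC -addn1 leq_add2l.
by apply: gdist_edge; rewrite // g_sym.
Qed.

End GraphDistance.

Lemma gdist_mono (g g' : rel nat) m u v :
  (forall a b, g a b -> g' a b) -> gdist g' m u v <= gdist g m u v.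
Proof.
move=> sub_gg'; have := @gdist_potential g m (gdist g' m u) u v.
rewrite gdist_refl (minn_idPl (gdist_le_m _ _ _ _)); apply=> // a b _ le_bm gab.
apply: leq_trans (gdist_tri g' m u a b) _.
by rewrite -addn1 leq_add2l gdist_edge ?sub_gg'.
Qed.

Lemma gdist_ext (g g' : rel nat) m u v :
  g =2 g' -> gdist g m u v = gdist g' m u v.
Proof. by move=> eq_g; apply/eqP; rewrite eqn_leq !gdist_mono // => a b; rewrite eq_g. Qed.

Section AddEdge.
Variables (g : rel nat) (m x y L : nat).

Let g' : rel nat := fun a b => g a b || is_edge x y a b.

(* Length of a shortest walk from [u] to [w] in [g'] that uses the new edge
   [xy] at most once (a [g]-walk, or [g]-walks to and from the new edge). *)
Definition dist_via u w :=
  minn (gdist g m u w)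
       (minn (gdist g m u x + 1 + gdist g m y w) (gdist g m u y + 1 + gdist g m x w)).

Lemma dist_via_step u a b : b <= m -> g' a b -> dist_via u b <= (dist_via u a).+1.
Proof.
have d_step z a' b' : b' <= m -> g a' b' -> gdist g m z b' <= (gdist g m z a').+1.
  move=> le_bm gab; apply: leq_trans (gdist_tri g m z a' b') _.
  by rewrite -addn1 leq_add2l gdist_edge.
move=> le_bm /orP [gab | /orP [] /andP [/eqP -> /eqP ->]]; rewrite /dist_via ?gdist_refl.
- by have := d_step u a b; have := d_step x a b; have := d_step y a b; lia.
- lia.
- lia.
Qed.

Hypotheses (dxy : gdist g m x y <= L) (dyx : gdist g m y x <= L).

Lemma gdist_add_edge u v : gdist g m u v <= gdist g' m u v + L.
Proof.
have lower : minn (dist_via u v) m <= gdist g' m u v.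
  apply: gdist_potential; first by rewrite /dist_via gdist_refl min0n.
  by move=> a b _; apply: dist_via_step.
have upper : gdist g m u v <= dist_via u v + L.
  have := gdist_tri g m u x v; have := gdist_tri g m x y v.
  have := gdist_tri g m u y v; have := gdist_tri g m y x v.
  by rewrite /dist_via; lia.
by have := gdist_le_m g m u v; lia.
Qed.

End AddEdge.

(* Integer-valued metrics on {0,...,m}; the graph distance of any symmetric
   graph is one (unreachable pairs sit at the conventional distance [m]). *)
Definition nat_metric (m : nat) (d : nat -> nat -> nat) : Prop :=
  [/\ forall u, d u u = 0, forall u v, d u v = 0 -> u = v,
      forall u v, u <= m -> v <= m -> d u v = d v u
    & forall u v w, d u w <= d u v + d v w].

Lemma gdist_metric (g : rel nat) m :
  0 < m -> (forall a b, g a b = g b a) -> nat_metric m (gdist g m).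
Proof.
move=> m_gt0 g_sym; split => [u | u v | u v | u v w]; first exact: gdist_refl.
- exact: gdist_eq0.
- exact: gdist_sym.
- exact: gdist_tri.
Qed.

Section RealLists.
Local Open Scope R_scope.
Variables (A : eqType) (f : A -> R).

Lemma foldr_Rmax_init a s : a <= foldr Rmax a (map f s).
Proof. by elim: s => [|y s IH] /=; [exact: Rle_refl | exact: Rle_trans IH (Rmax_r _ _)]. Qed.

Lemma foldr_Rmax_ge a s x : (x \in s)%N -> f x <= foldr Rmax a (map f s).
Proof.
elim: s => [//|y s IH]; rewrite inE => /orP [/eqP -> | x_s] /=; first exact: Rmax_l.
exact: Rle_trans (IH x_s) (Rmax_r _ _).
Qed.

Lemma foldr_Rmax_lub a s c :
  a <= c -> (forall x, (x \in s)%N -> f x <= c) -> foldr Rmax a (map f s) <= c.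
Proof.
move=> le_ac; elim: s => [//|y s IH] /= le_sc.
apply: Rmax_lub; first by apply: le_sc; rewrite mem_head.
by apply: IH => x x_s; apply: le_sc; rewrite inE x_s orbT.
Qed.

Lemma foldr_Rmin_le a s x : (x \in s)%N -> foldr Rmin a (map f s) <= f x.
Proof.
elim: s => [//|y s IH]; rewrite inE => /orP [/eqP -> | x_s] /=; first exact: Rmin_l.
exact: Rle_trans (Rmin_r _ _) (IH x_s).
Qed.

Lemma maxR_ge s x : (x \in s)%N -> f x <= maxR (map f s).
Proof.
case: s => [//|y s]; rewrite inE => /orP [/eqP -> | x_s] /=; last exact: foldr_Rmax_ge.
exact: foldr_Rmax_init.
Qed.

Lemma maxR_le s c : 0 <= c -> (forall x, (x \in s)%N -> f x <= c) -> maxR (map f s) <= c.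
Proof.
case: s => [//|y s] /= c_ge0 le_sc; apply: foldr_Rmax_lub; first by apply: le_sc; rewrite mem_head.
by move=> x x_s; apply: le_sc; rewrite inE x_s orbT.
Qed.

Lemma minR_le s x : (x \in s)%N -> minR (map f s) <= f x.
Proof.
case: s => [//|y s]; rewrite inE => /orP [/eqP -> | x_s] /=; last exact: foldr_Rmin_le.
elim: s {x} => [|z s IH] /=; [exact: Rle_refl | exact: Rle_trans (Rmin_r _ _) IH].
Qed.

End RealLists.

(* Coupling two metrics on the same finite set: if they differ by at most
   [2c] everywhere, glue the two copies so that crossing from one to the
   other costs slightly more than [c]; every point is then within that
   distance of its twin, so the copies are [c]-close. *)
Section Coupling.
Variables (m : nat) (d1 d2 : nat -> nat -> nat).
Hypotheses (d1_metric : nat_metric m d1) (d2_metric : nat_metric m d2).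

Definition bridge (x y : nat) : nat :=
  foldr minn (d1 x 0 + d2 0 y) [seq d1 x z + d2 z y | z <- iota 0 m.+1].

Lemma bridge_le x y z : z <= m -> bridge x y <= d1 x z + d2 z y.
Proof.
move=> le_zm; have : d1 x z + d2 z y \in [seq d1 x z + d2 z y | z <- iota 0 m.+1].
  by apply/mapP; exists z; rewrite // mem_iota add0n ltnS.
rewrite /bridge; elim: (map _ _) => [//|a s IH]; rewrite inE => /orP [/eqP -> | /IH le_s] /=.
  exact: geq_minl.
exact: leq_trans (geq_minr _ _) le_s.
Qed.

Lemma bridge_attained x y : exists2 z, z <= m & bridge x y = d1 x z + d2 z y.
Proof.
suff : bridge x y \in d1 x 0 + d2 0 y :: [seq d1 x z + d2 z y | z <- iota 0 m.+1].
  rewrite inE => /orP [/eqP -> | /mapP [z]]; first by exists 0.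
  by rewrite mem_iota add0n ltnS; exists z.
rewrite /bridge; elim: (map _ _) => [|a s IH] /=; first by rewrite mem_head.
set b := foldr minn _ s in IH *; case: leqP => _; first by rewrite !inE eqxx orbT.
by move: IH; rewrite !inE => /orP [] ->; rewrite ?orbT.
Qed.

Local Open Scope R_scope.
Variable c : R.
Hypothesis close12 :
  forall u v, (u <= m)%N -> (v <= m)%N -> INR (d1 u v) <= INR (d2 u v) + 2 * c.
Hypothesis close21 :
  forall u v, (u <= m)%N -> (v <= m)%N -> INR (d2 u v) <= INR (d1 u v) + 2 * c.

Lemma close_c_ge0 : 0 <= c.
Proof.
have := close12 (leq0n m) (leq0n m).
by case: d1_metric => -> _ _ _; case: d2_metric => -> _ _ _ /=; lra.
Qed.

Definition coupling_space := (bool * 'I_m.+1)%type.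

Definition coupling (r : R) (p q : coupling_space) : R :=
  match p, q with
  | (false, x), (false, y) => INR (d1 x y)
  | (true, x), (true, y) => INR (d2 x y)
  | (false, x), (true, y) => r + INR (bridge x y)
  | (true, x), (false, y) => r + INR (bridge y x)
  end.

Lemma coupling_tri r : c <= r ->
  forall p q s, coupling r p s <= coupling r p q + coupling r q s.
Proof.
move=> le_cr.
case: d1_metric => _ _ sym1 tri1'; case: d2_metric => _ _ sym2 tri2'.
have tri1 u v w : INR (d1 u w) <= INR (d1 u v) + INR (d1 v w).
  by rewrite -plus_INR; apply/le_INR/leP/tri1'.
have tri2 u v w : INR (d2 u w) <= INR (d2 u v) + INR (d2 v w).
  by rewrite -plus_INR; apply/le_INR/leP/tri2'.
have bridge_leR x y z : (z <= m)%N -> INR (bridge x y) <= INR (d1 x z) + INR (d2 z y).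
  by move=> le_zm; rewrite -plus_INR; apply/le_INR/leP/bridge_le.
have bridge_eqR x y : exists2 z, (z <= m)%N & INR (bridge x y) = INR (d1 x z) + INR (d2 z y).
  by case: (bridge_attained x y) => z le_zm ->; exists z; rewrite // plus_INR.
have ord_le (x : 'I_m.+1) : (x <= m)%N by rewrite -ltnS ltn_ord.
move=> [[] x] [[] y] [[] z] /=.
- exact: tri2.
- case: (bridge_eqR z y) => w le_wm ->; have := bridge_leR z x w le_wm.
  by have := tri2 w y x; rewrite (sym2 y x) //; lra.
- case: (bridge_eqR y x) => w le_wm ->; case: (bridge_eqR y z) => w' le_w'm ->.
  have := tri2 x w z; have := tri2 w w' z; have := close21 le_wm le_w'm.
  by have := tri1 w y w'; rewrite (sym2 x w) // (sym1 w y) //; lra.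
- case: (bridge_eqR y x) => w le_wm ->; have := bridge_leR z x w le_wm.
  by have := tri1 z y w; rewrite (sym1 z y) //; lra.
- case: (bridge_eqR x y) => w le_wm ->; have := bridge_leR x z w le_wm.
  by have := tri2 w y z; have := pos_INR (bridge z y); lra.
- case: (bridge_eqR x y) => w le_wm ->; case: (bridge_eqR z y) => w' le_w'm ->.
  have := tri1 x w z; have := tri1 w w' z; have := close12 le_wm le_w'm.
  by have := tri2 w y w'; rewrite (sym1 w' z) // (sym2 y w') //; lra.
- case: (bridge_eqR y z) => w le_wm ->; have := bridge_leR x z w le_wm.
  by have := tri1 x y w; have := pos_INR (bridge y z); lra.
- exact: tri1.
Qed.

Lemma coupling_metric r : c <= r -> 0 < r -> is_metric (coupling r).
Proof.
move=> le_cr r_gt0; case: d1_metric => refl1 sep1 sym1 _; case: d2_metric => refl2 sep2 sym2 _.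
have ord_le (x : 'I_m.+1) : (x <= m)%N by rewrite -ltnS ltn_ord.
split; last split; last split; last exact: coupling_tri.
- move=> [[] x] [[] y] /=; try apply: pos_INR.
  + by have := pos_INR (bridge y x); lra.
  + by have := pos_INR (bridge x y); lra.
- move=> [[] x] [[] y] /=; split.
  + by move/(INR_eq _ 0)/sep2/val_inj ->.
  + by case=> ->; rewrite refl2.
  + by have := pos_INR (bridge y x); lra.
  + by [].
  + by have := pos_INR (bridge x y); lra.
  + by [].
  + by move/(INR_eq _ 0)/sep1/val_inj ->.
  + by case=> ->; rewrite refl1.
- move=> [[] x] [[] y] //=; first by rewrite sym2.
  by rewrite sym1.
Qed.

Lemma GH_le_of_close rho : (rho \in vset m)%N ->
  GH_le m (fun u v => INR (d1 u v)) (fun u v => INR (d2 u v)) rho rho c.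
Proof.
move=> rho_m eps eps_gt0; have c_ge0 := close_c_ge0.
pose r := c + eps / 2.
exists coupling_space, (coupling r), (fun u => (false, inord u)), (fun u => (true, inord u)).
have inordK' u : (u \in vset m)%N -> nat_of_ord (@inord m u) = u.
  by rewrite /vset mem_iota add1n ltnS => /andP [_ le_um]; rewrite inordK.
have cross u : (u \in vset m)%N -> coupling r (false, inord u) (true, inord u) <= r.
  move=> u_m /=; rewrite inordK' //.
  have := @bridge_le u u u; case: d1_metric => -> _ _ _; case: d2_metric => -> _ _ _.
  move: u_m; rewrite /vset mem_iota add1n ltnS => /andP [_ le_um] /(_ le_um) /leP /le_INR /=.
  lra.
split; first by apply: coupling_metric; rewrite /r; lra.
split; first by move=> u v u_m v_m /=; rewrite !inordK'.
split; first by move=> u v u_m v_m /=; rewrite !inordK'.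
apply: (Rle_lt_trans _ r); last by rewrite /r; lra.
apply: Rmax_lub; last exact: cross.
have r_ge0 : 0 <= r by rewrite /r; lra.
apply: Rmax_lub; apply: maxR_le => // _ /mapP [u u_m ->]; apply: Rle_trans (cross u u_m).
- by rewrite -map_comp; apply: (minR_le (fun v => coupling r (false, inord u) (true, inord v))).
- by rewrite -map_comp; apply: (minR_le (fun v => coupling r (false, inord v) (true, inord u))).
Qed.

End Coupling.

Lemma pairwise_leq_const (s : seq nat) c : all (pred1 c) s -> pairwise leq s.
Proof.
elim: s => [//|x s IH] /= /andP [/eqP -> s_c]; rewrite IH // andbT.
by apply/allP => y y_s; rewrite (eqP (allP s_c y y_s)).
Qed.

Section Tree.
Variables (m : nat) (T : rel nat).
Hypotheses (m_gt0 : 0 < m) (T_tree : is_tree m T).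

(* Depth is the distance from the root [1]; the vertices are 1..m, and [0]
   serves as the parent of the root. *)
Local Notation depth := (gdist T m 1).
Local Notation parent := (tparent m T).
Local Notation vertex x := (0 < x <= m).

Lemma T_sym u v : T u v = T v u. Proof. by case: T_tree. Qed.
Lemma T_irr u : ~~ T u u. Proof. by case: T_tree. Qed.
Lemma T_range u v : T u v -> vertex u && vertex v. Proof. by case: T_tree => _ _ /(_ u v). Qed.
Lemma T_0 v : T 0 v = false. Proof. by apply/negP => /T_range. Qed.

Lemma path_range a p : path T a p -> all (fun x => vertex x) p.
Proof.
elim: p a => [//|x p IH] a /= /andP [Tax x_path].
by rewrite (IH x x_path) andbT; case/andP: (T_range Tax).
Qed.

Lemma depth_lt u : vertex u -> depth u < m.
Proof.
move=> u_vx; case: T_tree => _ _ _ /(_ u u_vx) [p /andP [p_path /eqP p_last]] _.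
case: (shortenP p_path) p_last => q q_path q_uniq q_sub q_last.
have p_vx := path_range p_path.
have size_q : size (1 :: q) <= m.
  rewrite -(size_iota 1 m); apply: uniq_leq_size => // x.
  rewrite inE mem_iota add1n ltnS => /orP [/eqP -> | x_q]; first by rewrite leqnn m_gt0.
  exact: allP p_vx x (q_sub x x_q).
apply: leq_ltn_trans size_q; rewrite -q_last; apply: gdist_path => //.
by apply/allP => x x_q; case/andP: (allP p_vx x (q_sub x x_q)).
Qed.

Lemma depth_root : depth 1 = 0. Proof. exact: gdist_refl. Qed.

Lemma depth_ne1 r d : depth r = d.+1 -> r != 1.
Proof. by move=> dr; apply/eqP => r1; rewrite r1 depth_root in dr. Qed.

Lemma depth_edge a b : T a b -> depth b <= (depth a).+1.
Proof.
move=> Tab; apply: leq_trans (gdist_tri T m 1 a b) _; rewrite -[(depth a).+1]addn1 leq_add2l.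
by apply: gdist_edge; case/andP: (T_range Tab) => _ /andP [].
Qed.

Lemma parent_root : parent 1 = 0.
Proof.
by rewrite /tparent depth_root (eq_filter (a2 := pred0)) ?filter_pred0 // => w; rewrite ltn0 andbF.
Qed.

Lemma parent_0 : parent 0 = 0.
Proof. by rewrite /tparent (eq_filter (a2 := pred0)) ?filter_pred0 // => w; rewrite T_0. Qed.

Lemma parent_spec u : vertex u -> u != 1 ->
  [/\ vertex (parent u), T u (parent u) & (depth (parent u)).+1 = depth u].
Proof.
move=> u_vx u_n1; move/walkbP: (gdist_walk (depth_lt u_vx)) => [p [size_p p_le p_path p_last]].
case/lastP: p size_p p_le p_path p_last => [|p w]; first by move=> _ _ _ /= u1; rewrite u1 eqxx in u_n1.
rewrite last_rcons size_rcons all_rcons rcons_path => size_p /andP [_ p_le] /andP [p_path Tw] w_u.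
subst w.
have dw' : depth (last 1 p) < depth u by rewrite -size_p ltnS gdist_path.
have : last 1 p \in [seq z <- iota 1 m | T u z && (depth z < depth u)].
  by rewrite mem_filter T_sym Tw dw' mem_iota add1n ltnS; case/andP: (T_range Tw).
rewrite /tparent; case E: [seq z <- _ | _] => [//|y s] _.
have : y \in [seq z <- iota 1 m | T u z && (depth z < depth u)] by rewrite E mem_head.
rewrite mem_filter mem_iota add1n ltnS => /andP [/andP [Tuy dy] y_vx]; split => //.
by apply/eqP; rewrite eqn_leq dy depth_edge // T_sym.
Qed.

Definition edge_list := [seq e <- [seq (u, v) | u <- vset m, v <- vset m] | (e.1 < e.2) && T e.1 e.2].

Definition parent_edge z := (minn (parent z) z, maxn (parent z) z).
Definition deeper_end (e : nat * nat) := if depth e.1 < depth e.2 then e.2 else e.1.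

Lemma nonroot_vertex z : (z \in iota 2 m.-1) = vertex z && (z != 1).
Proof.
rewrite mem_iota (_ : 2 + m.-1 = m.+1) ?add2n ?prednK //.
by case: z => [|[|z]] //=; rewrite ?andbF ?andbT.
Qed.

Lemma deeper_end_parent_edge z : vertex z -> z != 1 -> deeper_end (parent_edge z) = z.
Proof.
move=> z_vx z_n1; case: (parent_spec z_vx z_n1) => _ _ dpz.
rewrite /deeper_end /parent_edge /=; case: (leqP (parent z) z) => _ /=.
  by rewrite -dpz ltnSn.
by rewrite -dpz ltnNge leqnSn.
Qed.

Lemma parent_edge_in z : vertex z -> z != 1 -> parent_edge z \in edge_list.
Proof.
move=> z_vx z_n1; case: (parent_spec z_vx z_n1) => pz_vx Tzp dpz.
have pz_ne : parent z != z by apply: contra_eqN dpz => /eqP ->; rewrite gtn_eqF.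
rewrite /edge_list /parent_edge mem_filter /=; apply/andP; split.
  by case: (ltngtP (parent z) z) pz_ne => //= -> _; rewrite // T_sym.
apply/allpairsP; exists (minn (parent z) z, maxn (parent z) z) => /=.
by rewrite /vset !mem_iota !add1n !ltnS; case: (leqP (parent z) z) => _; rewrite ?pz_vx ?z_vx.
Qed.

(* A tree on [m] vertices has exactly the [m - 1] parent edges: every edge
   joins a non-root vertex to its parent. *)
Lemma tree_edge_parent x y : T x y -> (x = parent y /\ y != 1) \/ (y = parent x /\ x != 1).
Proof.
move=> Txy; case/andP: (T_range Txy) => x_vx y_vx.
have [e [e_in e_end e_sum]] :
    exists e, [/\ e \in edge_list, deeper_end e = x \/ deeper_end e = y & e.1 + e.2 = x + y].
  case: (ltngtP x y) => [lt_xy | lt_yx | eq_xy]; last by rewrite eq_xy (negbTE (T_irr y)) in Txy.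
  - exists (x, y); split => //; last by rewrite /deeper_end; case: ifP; auto.
    rewrite mem_filter /= lt_xy Txy; apply/allpairsP; exists (x, y).
    by rewrite /vset !mem_iota !add1n !ltnS x_vx y_vx.
  - exists (y, x); split; last by rewrite addnC.
    + rewrite mem_filter /= lt_yx T_sym Txy; apply/allpairsP; exists (y, x).
      by rewrite /vset !mem_iota !add1n !ltnS x_vx y_vx.
    + by rewrite /deeper_end; case: ifP; auto.
have : e \in map parent_edge (iota 2 m.-1).
  apply/negPn/negP => e_out.
  have uniq_es : uniq (e :: map parent_edge (iota 2 m.-1)).
    rewrite /= e_out map_inj_in_uniq ?iota_uniq // => a b.
    rewrite !nonroot_vertex => /andP [a_vx a_n1] /andP [b_vx b_n1] eq_ab.
    by rewrite -(deeper_end_parent_edge a_vx a_n1) eq_ab deeper_end_parent_edge.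
  have sub_es : {subset e :: map parent_edge (iota 2 m.-1) <= edge_list}.
    move=> f; rewrite inE => /orP [/eqP -> // | /mapP [z]].
    by rewrite nonroot_vertex => /andP [z_vx z_n1] ->; apply: parent_edge_in.
  have := uniq_leq_size uniq_es sub_es; case: T_tree => _ _ _ _ ->.
  by rewrite /= size_map size_iota ltnn.
case/mapP => z; rewrite nonroot_vertex => /andP [z_vx z_n1] ez.
have z_end := deeper_end_parent_edge z_vx z_n1; rewrite -ez in z_end.
have sum_z : parent z + z = x + y by rewrite -e_sum ez /parent_edge /= addn_min_max.
by case: e_end => end_e; rewrite end_e in z_end; subst z; [right | left]; split => //; lia.
Qed.

Lemma child_spec v w : T v w -> ~ (w = parent v /\ v != 1) ->
  [/\ parent w = v, depth w = (depth v).+1, vertex w & w != 1].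
Proof.
move=> Tvw not_parent; case/andP: (T_range Tvw) => v_vx w_vx.
case: (tree_edge_parent Tvw) => [[-> w_n1] | //].
by case: (parent_spec w_vx w_n1) => _ _ ->.
Qed.

Definition anc a x := exists s, iter s parent x = a.

Lemma iter_parent x s : vertex x -> s <= depth x ->
  vertex (iter s parent x) /\ depth (iter s parent x) = depth x - s.
Proof.
move=> x_vx; elim: s => [|s IH] le_s; first by rewrite subn0.
case: (IH (ltnW le_s)) => y_vx dy; rewrite iterS.
have y_n1 : iter s parent x != 1 by apply: (@depth_ne1 _ (depth x - s.+1)); rewrite dy; lia.
by case: (parent_spec y_vx y_n1) => py_vx _; rewrite dy; split => //; lia.
Qed.

Lemma iter_parent_overshoot x k : vertex x -> iter (depth x + k.+1) parent x = 0.
Proof.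
move=> x_vx; elim: k => [|k IH]; last by rewrite addnS iterS IH parent_0.
rewrite addn1 iterS; case: (iter_parent x_vx (leqnn (depth x))) => y_vx.
by rewrite subnn => /(gdist_eq0 m_gt0) <-; exact: parent_root.
Qed.

Lemma anc_steps x s : vertex x -> 0 < iter s parent x -> s <= depth x.
Proof.
move=> x_vx; apply: contraTT; rewrite -ltnNge => lt_s.
by rewrite -(subnKC lt_s) addSnnS iter_parent_overshoot.
Qed.

Lemma anc_depth a x : vertex x -> anc a x -> 0 < a -> vertex a /\ depth a <= depth x.
Proof.
move=> x_vx [s <-] a_gt0; have le_s := anc_steps x_vx a_gt0.
by case: (iter_parent x_vx le_s) => a_vx ->; rewrite leq_subr.
Qed.

Lemma anc_parent a x : anc a (parent x) -> anc a x.
Proof. by case=> s <-; exists s.+1; rewrite iterSr. Qed.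

Lemma anc_comparable a b x : vertex x -> anc a x -> anc b x -> 0 < a -> 0 < b ->
  depth a <= depth b -> anc a b.
Proof.
move=> x_vx [s <-] [s' <-] a_gt0 b_gt0.
have [le_s le_s'] := (anc_steps x_vx a_gt0, anc_steps x_vx b_gt0).
case: (iter_parent x_vx le_s) => _ ->; case: (iter_parent x_vx le_s') => _ -> le_d.
by exists (s - s'); rewrite -iterD subnK //; lia.
Qed.

Lemma iter_parent_gdist x s1 s2 : vertex x -> s1 <= s2 -> s2 <= depth x ->
  gdist T m (iter s2 parent x) (iter s1 parent x) <= s2 - s1.
Proof.
move=> x_vx le_12; elim: s2 le_12 => [|s2 IH] le_12 le_s2.
  by move: le_12; rewrite leqn0 => /eqP ->; rewrite gdist_refl.
move: le_12; rewrite leq_eqVlt => /orP [/eqP -> | lt_12]; first by rewrite gdist_refl.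
case: (iter_parent x_vx (ltnW le_s2)) => y_vx dy.
have y_n1 : iter s2 parent x != 1 by apply: (@depth_ne1 _ (depth x - s2.+1)); rewrite dy; lia.
case: (parent_spec y_vx y_n1) => _ T_py _; rewrite iterS.
apply: leq_trans (gdist_tri T m _ (iter s2 parent x) _) _.
have := IH lt_12 (ltnW le_s2); have : gdist T m (parent (iter s2 parent x)) (iter s2 parent x) <= 1.
  by apply: gdist_edge; [rewrite T_sym | case/andP: y_vx].
lia.
Qed.

Lemma anc_gdist a b x : vertex x -> anc a x -> anc b x -> 0 < a -> 0 < b ->
  gdist T m a b <= (depth a - depth b) + (depth b - depth a).
Proof.
move=> x_vx a_x b_x a_gt0 b_gt0.
have [a_vx _] := anc_depth x_vx a_x a_gt0; have [b_vx _] := anc_depth x_vx b_x b_gt0.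
wlog le_ab : a b a_x b_x a_gt0 b_gt0 a_vx b_vx / depth a <= depth b.
  move=> gen; case: (leqP (depth a) (depth b)) => [|/ltnW le_ba]; first exact: gen.
  rewrite (gdist_sym T_sym); [rewrite addnC; exact: gen | by case/andP: a_vx | by case/andP: b_vx].
case: a_x b_x a_gt0 b_gt0 a_vx b_vx le_ab => [s <-] [s' <-] a_gt0 b_gt0 _ _.
have [le_s le_s'] := (anc_steps x_vx a_gt0, anc_steps x_vx b_gt0).
case: (iter_parent x_vx le_s) => _ ->; case: (iter_parent x_vx le_s') => _ -> le_d.
have le_ss : s' <= s by lia.
by apply: leq_trans (iter_parent_gdist x_vx le_ss le_s) _; lia.
Qed.

Local Notation O i := (dfsO m T i).
Local Notation A i := (dfs_state m T i).2.
Local Notation vtx i := (dfsv m T i).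

Lemma dfsO_S i : O i.+1 = nbrs m T (vtx i) (O i) (A i) ++ behead (O i).
Proof. by rewrite /dfsv /dfsO /dfs_state iterS; case: (iter i _ _). Qed.

Lemma dfsA_S i : A i.+1 = vtx i :: A i.
Proof. by rewrite /dfsv /dfsO /dfs_state iterS; case: (iter i _ _). Qed.

Lemma vtx_visited t i : t < i -> vtx t \in A i.
Proof.
elim: i => [//|i IH]; rewrite ltnS leq_eqVlt dfsA_S inE => /orP [/eqP -> | /IH ->].
  by rewrite eqxx.
by rewrite orbT.
Qed.

Lemma dfsO_nil i : O i = [::] -> O i.+1 = [::].
Proof.
move=> Oi0; rewrite dfsO_S Oi0 cats0 /nbrs /dfsv Oi0.
by rewrite (eq_filter (a2 := pred0)) ?filter_pred0 // => w; rewrite T_0.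
Qed.

(* The bookkeeping attached to the entry [w] at position [k] (counted from
   the bottom of the stack) when it was pushed at step [t] as a child of
   [v_t]: positions pushed at step [t] lie between [X(t)] and [X(t+1)], and
   [v_(t+1)] is a child of [v_t]. *)
Definition push_record (w k t : nat) : Prop :=
  [/\ parent w = vtx t, depth w = (depth (vtx t)).+1,
      (size (O t)).-1 <= k <= (size (O t.+1)).-1 & depth (vtx t.+1) = (depth (vtx t)).+1].

Definition stack_inv i : Prop :=
  [/\ all (fun x => vertex x) (O i), pairwise leq (map depth (rev (O i)))
    & forall k, k < size (O i) -> exists2 t, t < i &
        push_record (nth 0 (rev (O i)) k) k t /\ anc (vtx t) (vtx i)].

Section Step.
Variables (i v : nat) (rest : seq nat).
Hypothesis O_i : O i = v :: rest.
Hypotheses (stack_vx : all (fun x => vertex x) (v :: rest))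
           (stack_sorted : pairwise leq (map depth (rev rest ++ [:: v])))
           (stack_pushed : forall k, k < size rest -> exists2 t, t < i &
              push_record (nth 0 (rev rest) k) k t /\ anc (vtx t) v)
           (v_parent : v = 1 \/ parent v \in A i).

Let N := nbrs m T v (v :: rest) (A i).

Lemma vtx_i : vtx i = v. Proof. by rewrite /dfsv O_i. Qed.

Lemma O_succ : O i.+1 = N ++ rest. Proof. by rewrite dfsO_S O_i vtx_i. Qed.

(* The newly discovered neighbours of [v] are its children: its parent, if
   any, has already been explored. *)
Lemma new_children w : w \in N -> [/\ parent w = v, depth w = (depth v).+1, vertex w & w != 1].
Proof.
rewrite /N /nbrs mem_filter => /andP [/andP [/andP [Tvw w_new] _] _].
apply: child_spec => // [[w_par v_n1]]; case: v_parent => [v1 | ].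
  by rewrite v1 eqxx in v_n1.
by rewrite -w_par (negbTE w_new).
Qed.

Lemma old_parent k : k < size rest -> exists2 t, t < i &
  [/\ push_record (nth 0 (rev rest) k) k t, anc (vtx t) v, 0 < vtx t & depth (vtx t) <= depth v].
Proof.
move=> lt_k; case: (stack_pushed lt_k) => t lt_ti [rec_t anc_t]; exists t => //.
case: (rec_t) => par_w dw _ _.
have w_vx : vertex (nth 0 (rev rest) k).
  by apply: (allP (stack_vx)); rewrite inE -mem_rev mem_nth ?size_rev ?orbT.
case: (parent_spec w_vx (depth_ne1 dw)); rewrite par_w => /andP [vt_gt0 _] _ _.
by have [_ le_d] := anc_depth (andP stack_vx).1 anc_t vt_gt0; split.
Qed.

Lemma stack_inv_pop : N = [::] -> O i.+1 != [::] -> stack_inv i.+1.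
Proof.
move=> N0 rest_n0; rewrite /stack_inv O_succ N0 /= in rest_n0 *.
move: stack_sorted; rewrite map_cat pairwise_cat => /and3P [_ sorted_rest _].
split => //; first by case/andP: stack_vx.
set top := (size rest).-1.
have lt_top : top < size rest by rewrite /top prednK // lt0n size_eq0.
have vtx_top : vtx i.+1 = nth 0 (rev rest) top.
  rewrite nth_rev // /top prednK ?lt0n ?size_eq0 // subnn /dfsv O_succ N0.
  by case: (rest) rest_n0.
move=> k lt_k; case: (old_parent lt_k) => t lt_ti [rec_t anc_t t_gt0 _].
exists t; first exact: ltnW.
split=> //; case: (old_parent lt_top) => t2 _ [rec_t2 anc_t2 t2_gt0 _].
case: rec_t rec_t2 => par_k d_k _ _ [par_top d_top _ _].
suff anc_t_t2 : anc (vtx t) (vtx t2) by rewrite vtx_top; apply: anc_parent; rewrite par_top.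
apply: (anc_comparable (andP stack_vx).1 anc_t anc_t2 t_gt0 t2_gt0).
have le_k : k <= top by rewrite /top -ltnS prednK // lt0n size_eq0.
rewrite -ltnS -d_k -d_top; move: le_k; rewrite leq_eqVlt => /orP [/eqP -> // | lt_kt].
move/(pairwiseP 0): sorted_rest => /(_ k top); rewrite !(nth_map 0) ?size_rev //.
by apply; rewrite ?inE ?size_map ?size_rev.
Qed.

Lemma stack_inv_push : N != [::] -> stack_inv i.+1.
Proof.
case EN : N => [//|w0 N'] _.
have top_child := new_children; rewrite EN in top_child.
have [par_w0 d_w0 _ _] := top_child w0 (mem_head _ _).
have vtx_top : vtx i.+1 = w0 by rewrite /dfsv O_succ EN.
have anc_top a : anc a v -> anc a (vtx i.+1).
  by move=> anc_a; rewrite vtx_top; apply: anc_parent; rewrite par_w0.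
rewrite /stack_inv O_succ EN rev_cat map_cat; split.
- rewrite all_cat; apply/andP; split; last by case/andP: stack_vx.
  by apply/allP => w w_N; case: (top_child w w_N).
- rewrite pairwise_cat; apply/and3P; split.
  + apply/allrelP => _ _ /mapP [w w_rest ->] /mapP [w' w'_N ->].
    rewrite mem_rev in w'_N; case: (top_child w' w'_N) => _ -> _ _.
    have lt_k : index w (rev rest) < size rest by rewrite -size_rev index_mem.
    case: (old_parent lt_k) => t _ [[_ d_w _ _] _ _ le_d]; move: d_w; rewrite nth_index // => ->.
    by rewrite ltnS.
  + by move: stack_sorted; rewrite map_cat pairwise_cat => /and3P [].
  + apply: (pairwise_leq_const (c := (depth v).+1)); apply/allP => _ /mapP [w w_N ->].
    by rewrite mem_rev in w_N; case: (top_child w w_N) => _ /= ->.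
- move=> k; rewrite size_cat addnC nth_cat size_rev => lt_k; case: ifPn => [old_k | new_k].
  + case: (old_parent old_k) => t lt_ti [rec_t anc_t _ _].
    by exists t; [exact: ltnW | split => //; exact: anc_top].
  + exists i => //; rewrite -leqNgt in new_k.
    have w_N : nth 0 (rev (w0 :: N')) (k - size rest) \in w0 :: N'.
      by rewrite -mem_rev mem_nth // size_rev ltn_subLR.
    case: (top_child _ w_N) => par_w d_w _ _; split; last by exists 1; rewrite /= vtx_top par_w0 vtx_i.
    split; rewrite ?par_w ?d_w ?vtx_i ?vtx_top ?d_w0 //.
    by move: lt_k; rewrite O_i O_succ EN size_cat /= new_k /=; lia.
Qed.

End Step.

Lemma stack_top_facts i v rest : (i = 0 \/ stack_inv i) -> O i = v :: rest ->
  [/\ all (fun x => vertex x) (v :: rest), pairwise leq (map depth (rev rest ++ [:: v])),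
      forall k, k < size rest -> exists2 t, t < i &
        push_record (nth 0 (rev rest) k) k t /\ anc (vtx t) v
    & v = 1 \/ parent v \in A i].
Proof.
case=> [-> | [inv_vx inv_sorted inv_pushed]] O_i.
  by case: O_i => <- <-; split => //=; [rewrite m_gt0 | left].
have vtx_i : vtx i = v by rewrite /dfsv O_i.
rewrite O_i in inv_vx; rewrite O_i rev_cons -cats1 in inv_sorted inv_pushed; split => //.
  move=> k lt_k; case: (inv_pushed k); first by rewrite /= ltnS ltnW.
  by rewrite nth_cat size_rev lt_k vtx_i => t; exists t.
right; case: (inv_pushed (size rest)) => // t lt_ti [[par_v _ _ _] _].
by move: par_v; rewrite nth_cat size_rev ltnn subnn /= => ->; apply: vtx_visited.
Qed.

Lemma stack_inv_succ i : (i = 0 \/ stack_inv i) -> O i.+1 != [::] -> stack_inv i.+1.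
Proof.
move=> inv_i ne_succ; case O_i : (O i) => [|v rest]; first by rewrite dfsO_nil in ne_succ.
case: (stack_top_facts inv_i O_i) => facts_vx facts_sorted facts_pushed facts_parent.
case: (nbrs m T v (v :: rest) (A i) =P [::]) => [N0 | /eqP N_ne].
  exact: (stack_inv_pop O_i facts_vx facts_sorted facts_pushed N0 ne_succ).
exact: (stack_inv_push O_i facts_vx facts_sorted facts_pushed facts_parent N_ne).
Qed.

Lemma stack_inv_all i : 0 < i -> O i != [::] -> stack_inv i.
Proof.
elim: i => [//|i IH] _ ne_succ; apply: (stack_inv_succ _ ne_succ).
case: i IH ne_succ => [|i] IH ne_succ; first by left.
by right; apply: IH => //; apply: contra ne_succ => /eqP /dfsO_nil ->.
Qed.

(* The two endpoints attached to a point [(i, j)] of [Q] are close in [T]: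
   [a], the [j]-th stack entry from the bottom, hangs from some [v_t] with
   [X(t) <= j - 1 <= X(t+1)], and both [v_t] and [b], the ancestor of [v_i]
   at depth [2j - 1], lie on the path from the root to [v_i]. *)
Lemma endpoints_close i j : inQX m T (i, j) -> inQH m T (i, j) ->
  let a := nth 0 (rev (O i)) j.-1 in
  let b := ancestor m T (vtx i) (j.*2 - 1) in
  [/\ vertex (vtx i), vertex a, vertex b & exists2 t, t.+1 < m &
     (gdist T m a b + 1 + height m T t.+1 <= (dfsX m T t.+1).*2 + 4) \/
     (gdist T m a b + (dfsX m T t).*2 <= height m T t)].
Proof.
move=> qX qH a b; move: qX qH; rewrite /inQX /inQH /= => /andP [j_gt0 j_X] /andP [_ j_H].
have lt_im : i < m by move: j_X; rewrite /dfsX; case: ifP => // _; rewrite leqNgt j_gt0.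
rewrite /dfsX /height lt_im in j_X j_H.
have ne_Oi : O i != [::] by move: j_X; case: (O i) => //=; rewrite leqNgt j_gt0.
have i_gt0 : 0 < i by rewrite lt0n; apply: contraTneq j_X => ->; rewrite -ltnNge.
case: (stack_inv_all i_gt0 ne_Oi) => stack_vx _ stack_pushed.
have lt_j : j.-1 < size (O i) by move: j_X j_gt0; case: (size (O i)) => //=; lia.
case: (stack_pushed _ lt_j) => t lt_ti [[par_a d_a X_t d_succ] anc_t].
have a_vx : vertex a by apply: (allP stack_vx); rewrite -mem_rev mem_nth // size_rev.
have vi_vx : vertex (vtx i) by rewrite /dfsv; case: (O i) ne_Oi stack_vx => //= x s _ /andP [].
case: (parent_spec a_vx (depth_ne1 d_a)); rewrite -/a par_a => vt_vx T_a _.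
have le_2j : j.*2 - 1 <= depth (vtx i) by lia.
have [b_vx d_b] : vertex b /\ depth b = j.*2 - 1.
  by case: (iter_parent vi_vx (leq_subr (j.*2 - 1) (depth (vtx i)))); rewrite subKn.
have anc_b : anc b (vtx i) by exists (depth (vtx i) - (j.*2 - 1)).
have d_tb := anc_gdist vi_vx anc_t anc_b (andP vt_vx).1 (andP b_vx).1.
have d_at : gdist T m a (vtx t) <= 1 by apply: gdist_edge; [exact: T_a | case/andP: vt_vx].
have d_ab := gdist_tri T m a (vtx t) b.
have lt_t1m : t.+1 < m by apply: leq_ltn_trans lt_im.
split => //; exists t => //.
rewrite /dfsX /height lt_t1m (ltn_trans (ltnSn t) lt_t1m) d_succ.
move: d_b X_t; rewrite -!muln2; lia.
Qed.

End Tree.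

Section Rerouting.
Local Open Scope R_scope.

(* Each replacement lengthens
   distances by at most [K]. *)
Lemma gdist_reroute (I : eqType) (m : nat) (T C : rel nat) (s : seq I)
    (x ya yb : I -> nat) (K : R) :
  (forall a b, T a b -> C a b) ->
  (forall q, (q \in s)%N -> [/\ (x q <= m)%N, (ya q <= m)%N,
      INR (gdist T m (ya q) (yb q)) + 1 <= K & INR (gdist T m (yb q) (ya q)) + 1 <= K]) ->
  forall u v,
    INR (gdist (fun a b => C a b || has (fun q => is_edge (x q) (ya q) a b) s) m u v)
    <= INR (gdist (fun a b => C a b || has (fun q => is_edge (x q) (yb q) a b) s) m u v)
       + INR (size s) * K.
Proof.
elim: s C => [|q s IH] C sub_TC close u v.
  by rewrite (@gdist_ext _ (fun a b => C a b || false)) //=; lra.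
have [x_le ya_le d_ab d_ba] := close q (mem_head _ _).
pose Cq a b := C a b || is_edge (x q) (ya q) a b.
have := IH Cq (fun a b Tab => introT orP (or_introl (sub_TC a b Tab))).
move=> /(_ (fun q' q'_s => close q' (mem_behead (s := q :: s) q'_s)) u v).
pose G a b := C a b || has (fun q => is_edge (x q) (yb q) a b) s.
pose G' a b := G a b || is_edge (x q) (ya q) a b.
rewrite (@gdist_ext _ (fun a b => C a b || has (fun q => is_edge (x q) (ya q) a b) (q :: s)));
  last by move=> a b; rewrite /Cq /= orbA.
rewrite (@gdist_ext (fun a b => Cq a b || has (fun q => is_edge (x q) (yb q) a b) s) G');
  last by move=> a b; rewrite /Cq /G' /G orbAC.
move=> le_IH.
have sub_TG' a b : T a b -> G' a b by move=> Tab; rewrite /G' /G sub_TC.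
have G'_x_ya : G' (x q) (ya q) by rewrite /G' /is_edge !eqxx orbT.
have G'_ya_x : G' (ya q) (x q) by rewrite /G' /is_edge !eqxx !orbT.
have d_x_yb : (gdist G' m (x q) (yb q) <= (gdist T m (ya q) (yb q)).+1)%N.
  apply: leq_trans (gdist_tri G' m _ (ya q) _) _.
  by rewrite -addn1 addnC leq_add ?gdist_mono ?gdist_edge.
have d_yb_x : (gdist G' m (yb q) (x q) <= (gdist T m (yb q) (ya q)).+1)%N.
  apply: leq_trans (gdist_tri G' m _ (ya q) _) _.
  by rewrite -addn1 leq_add ?gdist_mono ?gdist_edge.
pose L := maxn (gdist T m (ya q) (yb q)).+1 (gdist T m (yb q) (ya q)).+1.
have := gdist_add_edge (leq_trans d_x_yb (leq_maxl _ _)) (leq_trans d_yb_x (leq_maxr _ _)) u v.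
have sub_G'' : (gdist (fun a b => G' a b || is_edge (x q) (yb q) a b) m u v
    <= gdist (fun a b => C a b || has (fun q => is_edge (x q) (yb q) a b) (q :: s)) m u v)%N.
  apply: gdist_mono => a b /=; rewrite /G' /G.
  by case: (C a b) => //=; case: (is_edge _ _ a b); rewrite ?orbT //= => ->; rewrite ?orbT.
move=> /(fun h => leq_trans h (leq_add sub_G'' (leqnn L))) /leP /le_INR.
have L_K : INR L <= K by rewrite /L; case: leqP => _; rewrite S_INR.
rewrite plus_INR (_ : size (q :: s) = (size s).+1) // [INR (size s).+1]S_INR.
by have := pos_INR (size s); nra.
Qed.

Lemma endpoint_bound_real (d X0 H0 X1 H1 : nat) (M : R) :
  Rabs (INR X0 - INR H0 / INR 2) <= M -> Rabs (INR X1 - INR H1 / INR 2) <= M ->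
  (d + 1 + H1 <= X1.*2 + 4)%N \/ (d + X0.*2 <= H0)%N ->
  INR d + 1 <= 2 * (M + INR 2).
Proof.
move=> M0 M1 alt; have E2 : INR 2 = 2 by [].
have A1 := Rle_abs (INR X1 - INR H1 / INR 2).
have A0 := Rle_abs (- (INR X0 - INR H0 / INR 2)); rewrite Rabs_Ropp in A0.
rewrite E2 in M0 M1 A0 A1 *.
case: alt => /leP; rewrite -!mul2n -?plusE -?multE => /le_INR;
  by rewrite ?plus_INR ?mult_INR /=; lra.
Qed.

End Rerouting.

Lemma is_edge_sym a b u v : is_edge a b u v = is_edge a b v u.
Proof. by rewrite /is_edge orbC andbC [(v == b) && _]andbC. Qed.

Lemma add_edges_sym (I : Type) (T : rel nat) (s : seq I) (x y : I -> nat) :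
  (forall a b, T a b = T b a) ->
  forall a b, (T a b || has (fun q => is_edge (x q) (y q) a b) s)
            = (T b a || has (fun q => is_edge (x q) (y q) b a) s).
Proof. by move=> T_sym a b; rewrite T_sym; congr (_ || _); apply: eq_has => q; rewrite is_edge_sym. Qed.

Section Main.
Local Open Scope R_scope.
Variables (m : nat) (T : rel nat) (Q : seq (nat * nat)).
Hypotheses (m_gt0 : (0 < m)%N) (T_tree : is_tree m T).
Hypothesis same_Q : [seq q <- Q | inQX m T q] = [seq q <- Q | inQH m T q].

Let Mx := maxR [seq Rabs (INR (dfsX m T i) - INR (height m T i) / INR 2) | i <- iota 0 m].

Let endV (q : nat * nat) : nat := dfsv m T q.1.
Let endX (q : nat * nat) : nat := nth 0%N (rev (dfsO m T q.1)) q.2.-1.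
Let endH (q : nat * nat) : nat := ancestor m T (dfsv m T q.1) (q.2.*2 - 1)%N.

Let s := [seq q <- Q | inQX m T q].

Lemma endpoints_bound q : (q \in s)%N ->
  [/\ (endV q <= m)%N, (endX q <= m)%N, (endH q <= m)%N,
      INR (gdist T m (endX q) (endH q)) + 1 <= 2 * (Mx + INR 2)
    & INR (gdist T m (endH q) (endX q)) + 1 <= 2 * (Mx + INR 2)].
Proof.
move=> q_s; have := q_s; rewrite {1}/s same_Q !mem_filter => /andP [qH _].
move: q_s; rewrite mem_filter => /andP [qX _]; case: q qX qH => i j qX qH.
case: (endpoints_close m_gt0 T_tree qX qH) => /andP [_ vi_le] /andP [_ a_le] /andP [_ b_le].
case=> t lt_tm alt.
have M_at k : (k < m)%N -> Rabs (INR (dfsX m T k) - INR (height m T k) / INR 2) <= Mx.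
  move=> lt_km.
  by apply: (maxR_ge (fun k => Rabs (INR (dfsX m T k) - INR (height m T k) / INR 2))); rewrite mem_iota.
have bound := endpoint_bound_real (M_at t (ltnW lt_tm)) (M_at t.+1 lt_tm) alt.
split => //; rewrite gdist_sym //; exact: (T_sym T_tree).
Qed.

Lemma GX_edges : GX m T Q =2 fun a b => T a b || has (fun q => is_edge (endV q) (endX q) a b) s.
Proof. by []. Qed.

Lemma GH_edges : GH m T Q =2 fun a b => T a b || has (fun q => is_edge (endV q) (endH q) a b) s.
Proof. by move=> a b; rewrite /GH -same_Q. Qed.

Lemma gdist_GX_le u v :
  INR (gdist (GX m T Q) m u v) <= INR (gdist (GH m T Q) m u v) + 2 * (INR (size s) * (Mx + INR 2)).
Proof.
rewrite (gdist_ext _ _ _ GX_edges) (gdist_ext _ _ _ GH_edges).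
have := gdist_reroute (fun a b (Tab : T a b) => Tab) (fun q q_s =>
  let: And5 v_le x_le _ d_xh d_hx := endpoints_bound q_s in And4 v_le x_le d_xh d_hx) u v.
move/Rle_trans; apply; rewrite -Rmult_assoc (Rmult_comm (INR (size s)) 2) Rmult_assoc.
exact: Rle_refl.
Qed.

Lemma gdist_GH_le u v :
  INR (gdist (GH m T Q) m u v) <= INR (gdist (GX m T Q) m u v) + 2 * (INR (size s) * (Mx + INR 2)).
Proof.
rewrite (gdist_ext _ _ _ GX_edges) (gdist_ext _ _ _ GH_edges).
have := gdist_reroute (fun a b (Tab : T a b) => Tab) (fun q q_s =>
  let: And5 v_le _ h_le d_xh d_hx := endpoints_bound q_s in And4 v_le h_le d_hx d_xh) u v.
move/Rle_trans; apply; rewrite -Rmult_assoc (Rmult_comm (INR (size s)) 2) Rmult_assoc.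
exact: Rle_refl.
Qed.

End Main.

Theorem lemma13 (m : nat) (T : rel nat) (Q : seq (nat * nat)) :
  0 < m -> is_tree m T -> uniq Q ->
  [seq q <- Q | inQX m T q] = [seq q <- Q | inQH m T q] ->
  GH_le m (fun u v => INR (gdist (GX m T Q) m u v))
          (fun u v => INR (gdist (GH m T Q) m u v)) 1 1
    (Rmult (INR (size [seq q <- Q | inQX m T q]))
       (Rplus (maxR [seq Rabs (Rminus (INR (dfsX m T i)) (Rdiv (INR (height m T i)) (INR 2)))
                    | i <- iota 0 m])
              (INR 2))).
Proof.
move=> m_gt0 T_tree _ same_Q.
have GX_metric : nat_metric m (gdist (GX m T Q) m).
  by apply: gdist_metric => // a b; rewrite /GX; exact: (add_edges_sym _ _ _ (T_sym T_tree)).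
have GH_metric : nat_metric m (gdist (GH m T Q) m).
  by apply: gdist_metric => // a b; rewrite /GH; exact: (add_edges_sym _ _ _ (T_sym T_tree)).
apply: (GH_le_of_close GX_metric GH_metric); last by rewrite /vset mem_iota leqnn add1n ltnS.
- by move=> u v _ _; apply: gdist_GX_le.
- by move=> u v _ _; apply: gdist_GH_le.
Qed.
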